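(* If $A\in\{0,1\}^{n\times m}$ is a binary matrix, then its Boolean (Schein/Barvinok) rank equals its subtropical (Schein/Barvinok) rank.
   Context: $\mathbb{R}_+=[0,\infty)$. The max-times product of $B\in\mathbb{R}_+^{n\times k}$, $C\in\mathbb{R}_+^{k\times m}$ is $(B\boxtimes C)_{ij}=\max_{s=1}^{k} B_{is}C_{sj}$; the subtropical rank of $A\in\mathbb{R}_+^{n\times m}$ is the least $k$ such that $A=B\boxtimes C$ for some $B\in\mathbb{R}_+^{n\times k}$, $C\in\mathbb{R}_+^{k\times m}$. The Boolean product of binary matrices $B\in\{0,1\}^{n\times k}$, $C\in\{0,1\}^{k\times m}$ is $(B\circ C)_{ij}=\bigvee_{l=1}^k B_{il}C_{lj}$; the Boolean rank of a binary matrix $A$ is the least $k$ such that $A=B\circ C$ for some binary $B\in\{0,1\}^{n\times k}$, $C\in\{0,1\}^{k\times m}$. *)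

From mathcomp Require Import all_boot all_order all_algebra.
Set Implicit Arguments. Unset Strict Implicit. Unset Printing Implicit Defensive.
Import Order.TTheory GRing.Theory Num.Theory.
Local Open Scope ring_scope.

(* Max-times product over R_+ (entries of B, C assumed nonnegative);
   the empty max (k = 0) is 0, the least element of R_+. *)
Definition maxtimes (R : realFieldType) n k m
  (B : 'M[R]_(n, k)) (C : 'M[R]_(k, m)) : 'M[R]_(n, m) :=
  \matrix_(i, j) \big[Num.max/0]_(s < k) (B i s * C s j).

Definition nonneg_mx (R : realFieldType) n m (A : 'M[R]_(n, m)) : Prop :=
  forall i j, 0 <= A i j.

Definition subtrop_fact (R : realFieldType) n m (A : 'M[R]_(n, m)) (k : nat) : Prop :=
  exists (B : 'M[R]_(n, k)) (C : 'M[R]_(k, m)),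
    nonneg_mx B /\ nonneg_mx C /\ A = maxtimes B C.

Definition boolprod n k m (B : 'M[bool]_(n, k)) (C : 'M[bool]_(k, m)) : 'M[bool]_(n, m) :=
  \matrix_(i, j) [exists l : 'I_k, B i l && C l j].

Definition bool_fact n m (A : 'M[bool]_(n, m)) (k : nat) : Prop :=
  exists (B : 'M[bool]_(n, k)) (C : 'M[bool]_(k, m)), A = boolprod B C.

Definition real_of_bool (R : realFieldType) n m (A : 'M[bool]_(n, m)) : 'M[R]_(n, m) :=
  \matrix_(i, j) (if A i j then 1 else 0).

(* Ranks as least k admitting a factorization; stated via minimality
   to avoid choosing a witness. *)
Definition is_bool_rank n m (A : 'M[bool]_(n, m)) (r : nat) : Prop :=
  bool_fact A r /\ forall k, bool_fact A k -> (r <= k)%N.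

Definition is_subtrop_rank (R : realFieldType) n m (A : 'M[R]_(n, m)) (r : nat) : Prop :=
  subtrop_fact A r /\ forall k, subtrop_fact A k -> (r <= k)%N.

From mathcomp Require Import all_boot all_order all_algebra.
Set Implicit Arguments. Unset Strict Implicit. Unset Printing Implicit Defensive.
Import Order.TTheory GRing.Theory Num.Theory.
Local Open Scope ring_scope.

(* Both ranks are least inner dimensions of factorizations, so it suffices to
   match factorizations of each size. A Boolean factorization is, read over
   {0, 1}, a max-times factorization. Conversely, for nonnegative factors an
   entry of B ⊠ C is positive iff some B i s and C s j are both positive, so
   taking the supports of the factors of a max-times factorization of a 0/1
   matrix yields a Boolean factorization of it. *)

Section BigMaxZero.
Variables (R : realDomainType) (I : Type).

Lemma bigmax0_gt0 (r : seq I) (F : I -> R) :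
  (0 < \big[Num.max/0]_(i <- r) F i) = has (fun i => 0 < F i) r.
Proof. by elim: r => [|x r IH]; rewrite ?big_nil ?ltxx // big_cons lt_max IH. Qed.

Lemma bigmax0_indicator (r : seq I) (P : pred I) :
  \big[Num.max/0]_(i <- r) (if P i then 1 else 0 : R) = if has P r then 1 else 0.
Proof.
elim: r => [|x r IH]; rewrite ?big_nil // big_cons IH /=.
by case: (P x) (has P r) => [] []; rewrite ?maxxx ?(max_l ler01) ?(max_r ler01).
Qed.

End BigMaxZero.

Definition support_mx (R : realFieldType) n m (A : 'M[R]_(n, m)) : 'M[bool]_(n, m) :=
  \matrix_(i, j) (0 < A i j).

Section ZeroOneMatrices.
Variable R : realFieldType.

Lemma real_of_bool_nonneg n m (A : 'M[bool]_(n, m)) : nonneg_mx (real_of_bool R A).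
Proof. by move=> i j; rewrite mxE; case: (A i j); rewrite ?ler01. Qed.

Lemma support_real_of_bool n m (A : 'M[bool]_(n, m)) :
  support_mx (real_of_bool R A) = A.
Proof. by apply/matrixP => i j; rewrite !mxE; case: (A i j); rewrite ?ltr01 ?ltxx. Qed.

Lemma real_of_bool_boolprod n k m (B : 'M[bool]_(n, k)) (C : 'M[bool]_(k, m)) :
  real_of_bool R (boolprod B C) = maxtimes (real_of_bool R B) (real_of_bool R C).
Proof.
apply/matrixP => i j; rewrite !mxE.
have indicatorM (b c : bool) :
    (if b then 1 else 0 : R) * (if c then 1 else 0) = if b && c then 1 else 0.
  by case: b c => [] []; rewrite ?mulr1 ?mulr0.
under eq_bigr do rewrite !mxE indicatorM.
rewrite bigmax0_indicator; congr (if _ then _ else _).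
by apply/existsP/hasP => [[l]|[l]]; exists l.
Qed.

Lemma support_maxtimes n k m (B : 'M[R]_(n, k)) (C : 'M[R]_(k, m)) :
  nonneg_mx B -> nonneg_mx C ->
  support_mx (maxtimes B C) = boolprod (support_mx B) (support_mx C).
Proof.
move=> B0 C0; apply/matrixP => i j; rewrite !mxE bigmax0_gt0.
apply/hasP/existsP => [[l _]|[l]].
  by rewrite mulr_ge0_gt0 // => BC; exists l; rewrite !mxE.
by rewrite !mxE => BC; exists l; rewrite ?mem_index_enum ?mulr_ge0_gt0.
Qed.

Lemma bool_fact_subtrop_fact n m (A : 'M[bool]_(n, m)) k :
  bool_fact A k <-> subtrop_fact (real_of_bool R A) k.
Proof.
split=> [[B [C ->]]|[B [C [B0 [C0 defA]]]]].
  exists (real_of_bool R B), (real_of_bool R C).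
  by rewrite real_of_bool_boolprod; split; [|split]; try exact: real_of_bool_nonneg.
exists (support_mx B), (support_mx C).
by rewrite -support_maxtimes // -defA support_real_of_bool.
Qed.

End ZeroOneMatrices.

Theorem lemma1 (R : realFieldType) (n m : nat) (A : 'M[bool]_(n, m)) (r : nat) :
  is_bool_rank A r <-> is_subtrop_rank (real_of_bool R A) r.
Proof.
have factE k := bool_fact_subtrop_fact R A k.
by split=> -[Ar Amin]; split=> [|k /factE/Amin //]; exact/factE.
Qed.
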